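(* Let $A\subset B$ be prime Goldie $\mathsf{k}$-algebras with $LD\,A=LD\,B$. If $B$ is $LD$-stable, then so is $A$.
   Context: $\mathsf{k}$ is a field of characteristic zero. $GK$ is Gelfand–Kirillov dimension: $GK\,R=\sup_V\limsup_m\log(\dim V^m)/\log m$ over subframes $V$ (finite-dimensional subspaces containing $1$). Lower transcendence degree $LD$: if every subframe $V$ admits a finite-dimensional nonzero $W$ with $\dim VW=\dim W$, then $LD\,R=0$; otherwise $LD\,R=\sup_V\sup\{d>0:\exists c>0,\ \dim VW\ge\dim W+c(\dim W)^{(d-1)/d}\text{ for all finite-dimensional }W\neq0\}$. $R$ is $LD$-stable if $LD\,R=GK\,R$. *)

From HB Require Import structures.
From mathcomp Require Import all_boot all_order all_algebra.
From mathcomp Require Import all_classical all_reals all_analysis.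
From mathcomp Require Import Rstruct.

Set Implicit Arguments.
Unset Strict Implicit.
Unset Printing Implicit Defensive.

Import Order.TTheory GRing.Theory Num.Theory.
Local Open Scope ring_scope.
Local Open Scope classical_set_scope.

Notation RR := Rdefinitions.R.

Section Subspaces.
Variables (k : fieldType) (V : lmodType k).

(* A finite-dimensional subspace is represented by a finite spanning list. *)
Definition span (s : seq V) : set V :=
  [set v | exists c : 'I_(size s) -> k, v = \sum_(i < size s) c i *: s`_i].

Definition lin_free (t : seq V) : Prop :=
  forall c : 'I_(size t) -> k,
    \sum_(i < size t) c i *: t`_i = 0 -> forall i, c i = 0.

Definition fdim (s : seq V) : nat :=
  \max_(n < (size s).+1 |
        `[< exists t : seq V, [/\ size t = val n, lin_free t &
                                   forall i : 'I_(size t), span s t`_i] >]) val n.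
End Subspaces.

Section Algebras.
Variables (k : fieldType) (A : algType k).

(* spanning list of the product subspace VW *)
Definition spmul (s t : seq A) : seq A := [seq x * y | x <- s, y <- t].

Fixpoint spow (s : seq A) (m : nat) : seq A :=
  if m is m'.+1 then spmul (spow s m') s else [:: 1].

Definition subframe (s : seq A) : Prop := span s 1.

Definition GKdim : \bar RR :=
  ereal_sup [set limn_esup
               (fun m : nat => ((ln (fdim (spow s m))%:R / ln m%:R : RR))%:E)
            | s in [set s : seq A | subframe s]].

Definition LDdim : \bar RR :=
  if `[< forall s : seq A, subframe s ->
          exists w : seq A, (0 < fdim w)%N /\ fdim (spmul s w) = fdim w >]
  then 0%E
  else ereal_sup [set d%:E | d in
         [set d : RR | 0 < d /\
           exists s : seq A, subframe s /\
             exists c : RR, 0 < c /\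
               forall w : seq A, (0 < fdim w)%N ->
                 (fdim w)%:R + c * ((fdim w)%:R `^ ((d - 1) / d))
                   <= (fdim (spmul s w))%:R :> RR]].

Definition LD_stable : Prop := LDdim = GKdim.

(* Ring-theoretic notions; [mul] is either the multiplication (right-sided
   notions) or the opposite multiplication (left-sided notions). *)
Definition side_ideal (mul : A -> A -> A) (I : set A) : Prop :=
  [/\ I 0, (forall x y, I x -> I y -> I (x - y)) &
      forall x r, I x -> I (mul x r)].

Definition side_ann (mul : A -> A -> A) (S : set A) : set A :=
  [set x | forall s, S s -> mul s x = 0].

(* no infinite direct sum of nonzero one-sided ideals *)
Definition finite_unif_dim (mul : A -> A -> A) : Prop :=
  ~ exists I : nat -> set A,
      [/\ forall n, side_ideal mul (I n),
          forall n, exists2 x, I n x & x != 0 &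
          forall (n : nat) (x : nat -> A), (forall i, (i < n)%N -> I i (x i)) ->
             \sum_(i < n) x i = 0 -> forall i, (i < n)%N -> x i = 0].

Definition acc_ann (mul : A -> A -> A) : Prop :=
  forall S : nat -> set A,
    (forall n, side_ann mul (S n) `<=` side_ann mul (S n.+1)) ->
    exists N, forall n, (N <= n)%N -> side_ann mul (S n) = side_ann mul (S N).

Definition right_goldie : Prop :=
  finite_unif_dim *%R /\ acc_ann *%R.
Definition left_goldie : Prop :=
  finite_unif_dim (fun x y => y * x) /\ acc_ann (fun x y => y * x).
Definition goldie : Prop := left_goldie /\ right_goldie.

Definition prime_ring : Prop :=
  (1 : A) != 0 /\
  forall a b : A, (forall r : A, a * r * b = 0) -> a = 0 \/ b = 0.

End Algebras.

(* LD <= GK holds in every algebra with 1 != 0.  If a subframe V satisfies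
   dim VW >= dim W + c (dim W)^((d-1)/d) for all W, then W = V^m gives
   a_(m+1) >= a_m + c a_m^((d-1)/d) for a_m = dim V^m; this forces a_m^(1/d)
   to grow at least linearly, so dim V^m >= (dl m)^d and the growth exponent of
   V is at least d.  GK is monotone along injective algebra maps, as the image
   of a subframe is a subframe with powers of no smaller dimension.  Hence
   LD A <= GK A <= GK B = LD B = LD A. *)

From Pilot Require Import Defs.
From HB Require Import structures.
From mathcomp Require Import all_boot all_order all_algebra.
From mathcomp Require Import all_classical all_reals all_analysis.
From mathcomp Require Import Rstruct.
From mathcomp Require Import ring lra.
(* [all_algebra] exports its own [span]; re-import [Defs] so that it wins. *)
Import Defs.

Set Implicit Arguments.
Unset Strict Implicit.
Unset Printing Implicit Defensive.

Import Order.TTheory GRing.Theory Num.Theory.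
Local Open Scope ring_scope.
Local Open Scope classical_set_scope.

Section Span.
Variables (k : fieldType) (V : lmodType k).
Implicit Types (s t : seq V) (v : V).

Lemma spanP s v :
  span s v <-> exists c : nat -> k, v = \sum_(i < size s) c i *: s`_i.
Proof.
split=> [[c ->]|[c ->]]; last by exists (fun i => c (val i)).
exists (fun i => oapp c 0 (insub i)).
by apply: eq_bigr => i _; rewrite valK.
Qed.

Lemma span0 s : span s 0.
Proof.
by apply/spanP; exists (fun=> 0); rewrite big1 // => i _; rewrite scale0r.
Qed.

Lemma spanD s x y : span s x -> span s y -> span s (x + y).
Proof.
move=> [c ->] [d ->]; exists (fun i => c i + d i).
by rewrite -big_split; apply: eq_bigr => i _; rewrite scalerDl.
Qed.

Lemma spanZ s a x : span s x -> span s (a *: x).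
Proof.
move=> [c ->]; exists (fun i => a * c i).
by rewrite scaler_sumr; apply: eq_bigr => i _; rewrite scalerA.
Qed.

Lemma span_sum s n (F : 'I_n -> V) :
  (forall i, span s (F i)) -> span s (\sum_i F i).
Proof.
by move=> sF; apply: (big_ind (span s)) => //; [exact: span0|exact: spanD].
Qed.

Lemma span_nth s i : (i < size s)%N -> span s s`_i.
Proof.
move=> lt_is; apply/spanP; exists (fun j => (j == i)%:R).
rewrite (bigD1 (Ordinal lt_is)) //= eqxx scale1r big1 ?addr0 // => j.
by rewrite -val_eqE /= => /negbTE->; rewrite scale0r.
Qed.

Lemma span_mem s x : x \in s -> span s x.
Proof.
by move=> xs; rewrite -(nth_index 0 xs); apply: span_nth; rewrite index_mem.
Qed.

Lemma sub_span s t : (forall x, x \in t -> span s x) -> span t `<=` span s.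
Proof.
move=> ts v [c ->]; apply: span_sum => i; apply: spanZ; apply: ts.
exact: mem_nth.
Qed.

Lemma lin_freeP t : lin_free t <-> forall c : nat -> k,
  \sum_(i < size t) c i *: t`_i = 0 -> forall i, (i < size t)%N -> c i = 0.
Proof.
split=> [free_t c tc0 i lt_it|free_t c tc0 i].
  exact: (free_t (fun j => c (val j)) tc0 (Ordinal lt_it)).
have := free_t (fun i => oapp c 0 (insub i)) _ i (ltn_ord i); rewrite /= valK.
by apply; rewrite -[RHS]tc0; apply: eq_bigr => j _; rewrite /= valK.
Qed.

Lemma lin_free_size_le s t : lin_free t ->
  (forall i, (i < size t)%N -> span s t`_i) -> (size t <= size s)%N.
Proof.
move=> free_t t_in_s; rewrite leqNgt; apply/negP => lt_st.
(* a nonzero row u with u *m M = 0, M the coordinate matrix of t in s, is a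
   nontrivial relation among the entries of t *)
have /boolp.choice[C tE] : forall i : 'I_(size t),
    exists C : 'I_(size s) -> k, t`_i = \sum_j C j *: s`_j.
  by move=> i; exact: t_in_s i (ltn_ord i).
pose M : 'M[k]_(size t, size s) := \matrix_(i, j) C i j.
have : kermx M != 0.
  rewrite kermx_eq0 /row_free neq_ltn.
  by rewrite (leq_ltn_trans (rank_leq_col M) lt_st).
case/rowV0Pn => u /sub_kermxP uM /negP; apply; apply/eqP/rowP => i.
rewrite mxE; move: i; apply: (free_t (fun i => u 0 i)).
under eq_bigr do rewrite tE scaler_sumr.
rewrite exchange_big big1 // => j _.
move/rowP/(_ j): uM; rewrite !mxE => uMj.
rewrite -[RHS](scale0r s`_j) -uMj scaler_suml.
by apply: eq_bigr => i _; rewrite scalerA mxE.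
Qed.

Let fdim_pred s : pred 'I_(size s).+1 := fun n => `[< exists t : seq V,
  [/\ size t = val n, lin_free t & forall i : 'I_(size t), span s t`_i] >].

Arguments fdim_pred : clear implicits.

Lemma fdimE s : fdim s = \max_(n in fdim_pred s) val n.
Proof. by []. Qed.

Lemma lin_free_size_le_fdim s t : lin_free t ->
  (forall i, (i < size t)%N -> span s t`_i) -> (size t <= fdim s)%N.
Proof.
move=> free_t t_in_s; have lt_ts : (size t < (size s).+1)%N.
  by rewrite ltnS; exact: lin_free_size_le.
rewrite fdimE; apply: (@leq_bigmax_cond _ _ _ (Ordinal lt_ts)).
by apply/asboolP; exists t; split=> // i; apply: t_in_s.
Qed.

Lemma fdim_attained s : exists t, [/\ size t = fdim s, lin_free t &
  forall i, (i < size t)%N -> span s t`_i].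
Proof.
rewrite fdimE; have /(eq_bigmax_cond val)[n] : (0 < #|fdim_pred s|)%N.
  apply/card_gt0P; exists ord0; rewrite unfold_in; apply/asboolP; exists [::].
  by split=> // [c _ []|[]].
rewrite unfold_in => /asboolP[t [tn free_t t_in_s]] ->.
by exists t; split=> // i lt_it; exact: (t_in_s (Ordinal lt_it)).
Qed.

Lemma fdimS s t : span t `<=` span s -> (fdim t <= fdim s)%N.
Proof.
move=> ts; have [u [<- free_u u_in_t]] := fdim_attained t.
by apply: lin_free_size_le_fdim => // i lt_iu; apply: ts; exact: u_in_t.
Qed.

Lemma fdim_gt0 s x : x != 0 -> span s x -> (0 < fdim s)%N.
Proof.
move=> x_neq0 sx; apply: (@lin_free_size_le_fdim s [:: x]) => [c|[]] //=.
rewrite big_ord1 => /eqP; rewrite scaler_eq0 (negbTE x_neq0) orbF => /eqP c0.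
by move=> i; rewrite (ord1 i).
Qed.

End Span.

Section Products.
Variables (k : fieldType) (A : algType k).
Implicit Types (s t : seq A).

Lemma span_mul s t x y : span s x -> span t y -> span (spmul s t) (x * y).
Proof.
move=> [c ->] [d ->]; rewrite mulr_suml; apply: span_sum => i.
rewrite mulr_sumr; apply: span_sum => j.
rewrite -scalerAl -scalerAr; do 2!apply: spanZ; apply: span_mem.
by apply: allpairs_f; apply: mem_nth.
Qed.

Lemma subframe_spow s m : subframe s -> subframe (spow s m).
Proof.
move=> s1; elim: m => [|m IH] /=; first by apply: span_mem; rewrite inE.
by rewrite /subframe -[1]mulr1; apply: span_mul.
Qed.

Lemma span_spmul_spow s m : span (spmul s (spow s m)) `<=` span (spow s m.+1).
Proof.
apply: sub_span => _ /allpairsP[[x y] [/= xs]] + ->.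
elim: m y => [|m IH] y /=.
  rewrite inE => /eqP->; rewrite mulr1 -[x]mul1r; apply: span_mem.
  by apply: allpairs_f; rewrite ?inE.
case/allpairsP=> [[z w] [/= zs ws ->]]; rewrite mulrA.
by apply: span_mul; [exact: IH | exact: span_mem].
Qed.

End Products.

Section Morphism.
Variables (k : fieldType) (A B : algType k) (f : {lrmorphism A -> B}).
Implicit Types (s t : seq A).

Lemma map_spmul s t : map f (spmul s t) = spmul (map f s) (map f t).
Proof.
rewrite /spmul; elim: s => [|x s IH] //=; rewrite map_cat IH -!map_comp.
by congr (_ ++ _); apply: eq_map => y /=; rewrite rmorphM.
Qed.

Lemma map_spow s m : map f (spow s m) = spow (map f s) m.
Proof. by elim: m => [|m IH] /=; rewrite ?rmorph1 // map_spmul IH. Qed.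

Lemma span_map s v : span s v -> span (map f s) (f v).
Proof.
case/spanP=> c ->; apply/spanP; exists c; rewrite size_map raddf_sum.
by apply: eq_bigr => i _; rewrite (nth_map 0) //; exact: linearZZ.
Qed.

Lemma subframe_map s : subframe s -> subframe (map f s).
Proof. by rewrite /subframe -(rmorph1 f); apply: span_map. Qed.

Lemma lin_free_map t : injective f -> lin_free t -> lin_free (map f t).
Proof.
move=> f_inj /lin_freeP free_t; apply/lin_freeP => c; rewrite size_map => fc0.
apply: free_t; apply: f_inj; rewrite raddf0 -[RHS]fc0 raddf_sum.
by apply: eq_bigr => i _; rewrite (nth_map 0) //; exact: linearZZ.
Qed.

Lemma fdim_map s : injective f -> (fdim s <= fdim (map f s))%N.
Proof.
move=> f_inj; have [t [<- free_t t_in_s]] := fdim_attained s.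
rewrite -(size_map f); apply: lin_free_size_le_fdim; first exact: lin_free_map.
move=> i; rewrite size_map => lt_it; rewrite (nth_map 0) //.
by apply: span_map; exact: t_in_s.
Qed.

End Morphism.

Section RealGrowth.
Variable R : realType.
Implicit Types (c d x u dl : R).

Lemma exprn1D_le_chord n u : 0 <= u <= 1 ->
  (1 + u) ^+ n <= 1 + (2 ^+ n - 1) * u.
Proof.
case/andP=> u0 u1; elim: n => [|n IH].
  by rewrite !expr0 subrr mul0r addr0.
have q1 : 1 <= 2 ^+ n :> R by rewrite exprn_ege1 // ler1n.
rewrite !exprS; apply: le_trans (ler_wpM2l _ IH) _; first lra.
move: (2 ^+ n) q1 => q q1.
have : (q - 1) * (u * u) <= (q - 1) * u by apply: ler_wpM2l; nra.
nra.
Qed.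

Lemma powR1D_le_chord d (n : nat) u : 0 <= d <= n%:R -> 0 <= u <= 1 ->
  (1 + u) `^ d <= 1 + (2 ^+ n - 1) * u.
Proof.
case/andP=> d0 dn u01; apply: le_trans (exprn1D_le_chord n u01).
rewrite -powR_mulrn; last by case/andP: u01 => u0 _; lra.
by apply: ler_powR => //; case/andP: u01 => u0 _; lra.
Qed.

Lemma powRVK x d : 0 < d -> 0 <= x -> (x `^ d^-1) `^ d = x.
Proof. by move=> d0 x0; rewrite -powRrM mulVf ?gt_eqF // powRr1. Qed.

Lemma powRKV x d : 0 < d -> 0 <= x -> (x `^ d) `^ d^-1 = x.
Proof. by move=> d0 x0; rewrite -powRrM mulfV ?gt_eqF // powRr1. Qed.

Lemma powR_root_step c d dl (n : nat) x :
  0 < d <= n%:R -> 0 <= dl <= 1 -> (2 ^+ n - 1) * dl <= c -> 1 <= x ->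
  (x `^ d^-1 + dl) `^ d <= x + c * x `^ ((d - 1) / d).
Proof.
case/andP=> d0 dn /andP[dl0 dl1] dlc x1; have x0 : 0 < x by lra.
set b := x `^ d^-1.
have b1 : 1 <= b by rewrite -(powRr0 x) ler_powR // invr_ge0 ltW.
have b0 : 0 < b by lra.
set u := dl / b.
have u01 : 0 <= u <= 1.
  by rewrite divr_ge0 ?(ltW b0) //= ler_pdivrMr // mul1r; lra.
have -> : b + dl = b * (1 + u) by rewrite mulrDr mulr1 mulrC divfK ?gt_eqF.
have -> : x `^ ((d - 1) / d) = x / b.
  rewrite mulrBl divff ?gt_eqF // mul1r powRB ?powRr1 ?ltW //.
  by apply/implyP => _; rewrite gt_eqF.
have u0 : 0 <= 1 + u by case/andP: u01 => u0 _; lra.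
rewrite powRM ?(ltW b0) // powRVK ?(ltW x0) //.
have dn' : 0 <= d <= n%:R by rewrite ltW.
apply: le_trans (ler_wpM2l (ltW x0) (powR1D_le_chord dn' u01)) _.
rewrite mulrDr mulr1 lerD2l.
have -> : x * ((2 ^+ n - 1) * u) = (2 ^+ n - 1) * dl * (x / b).
  by rewrite /u; ring.
by rewrite ler_wpM2r // divr_ge0 // ltW.
Qed.

Lemma powR_growth_of_increments (a : nat -> nat) c d : 0 < c -> 0 < d ->
  (forall m, (0 < a m)%N) ->
  (forall m, (a m)%:R + c * (a m)%:R `^ ((d - 1) / d) <= (a m.+1)%:R) ->
  exists2 dl, 0 < dl & forall m, (m%:R * dl) `^ d <= (a m)%:R.
Proof.
move=> c0 d0 a_gt0 a_incr; set n := Num.Def.archi_bound d.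
(* an integer n >= d and dl <= c / 2^n make each step of m |-> a m `^ d^-1
   at least dl, by powR_root_step *)
have dn : 0 < d <= n%:R by rewrite d0 ltW // archi_boundP // ltW.
have pow2n_gt0 : 0 < 2 ^+ n :> R by rewrite exprn_gt0.
pose dl := Num.min 1 (c / 2 ^+ n).
have dl0 : 0 < dl by rewrite lt_min ltr01 divr_gt0.
have dl01 : 0 <= dl <= 1 by rewrite ltW //= ge_min lexx.
have dlc : (2 ^+ n - 1) * dl <= c.
  have : dl <= c / 2 ^+ n by rewrite ge_min lexx orbT.
  by rewrite ler_pdivlMr // => h; nra.
have root_incr m : (a m)%:R `^ d^-1 + dl <= (a m.+1)%:R `^ d^-1.
  have am_ge0 : 0 <= (a m)%:R `^ d^-1 + dl by rewrite addr_ge0 ?powR_ge0 ?ltW.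
  rewrite -[leLHS](powRKV d0 am_ge0); apply: ge0_ler_powR.
  - by rewrite invr_ge0 ltW.
  - by rewrite nnegrE powR_ge0.
  - by rewrite nnegrE.
  - apply: le_trans (a_incr m); apply: (powR_root_step dn dl01 dlc).
    by rewrite ler1n.
exists dl => // m; rewrite -[leRHS](powRVK d0 (ler0n _ _)); apply: ge0_ler_powR.
- exact: ltW.
- by rewrite nnegrE mulr_ge0 // ltW.
- by rewrite nnegrE powR_ge0.
elim: m => [|m IH]; first by rewrite mul0r powR_ge0.
by apply: le_trans (root_incr m); rewrite -addn1 natrD mulrDl mul1r lerD2r.
Qed.

End RealGrowth.

Section LogGrowth.
Variable R : realType.
Local Open Scope ereal_scope.

Lemma le_limn_esup (u v : nat -> \bar R) :
  (forall n, u n <= v n) -> limn_esup u <= limn_esup v.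
Proof.
move=> uv; apply: le_ereal_inf_tmp => _ [N FN <-].
apply: (@le_trans _ _ (ereal_sup (u @` N))).
  by apply: ereal_inf_lbound; exists N.
apply: ge_ereal_sup => _ [n Nn <-]; apply: le_trans (uv n) _.
by apply: ereal_sup_ubound; exists n.
Qed.

Lemma limn_esup_ge_near (u : nat -> \bar R) x :
  (\forall n \near \oo, x <= u n) -> x <= limn_esup u.
Proof.
case=> N _ xu; apply: le_ereal_inf_tmp => _ [M [K _ KM] <-].
apply: le_ereal_sup_tmp; exists (u (maxn N K)).
  by exists (maxn N K) => //; apply: KM; rewrite /= leq_maxr.
by apply: xu; rewrite /= leq_maxl.
Qed.

Definition log_growth (a : nat -> nat) : \bar R :=
  limn_esup (fun m => (ln (a m)%:R / ln m%:R)%:E).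

Lemma ln_nat_ge0 (m : nat) : (0 <= ln (m%:R : R))%R.
Proof. by case: m => [|m]; [rewrite ln0 | apply: ln_ge0; rewrite ler1n]. Qed.

Lemma log_growth_ge0 a : 0 <= log_growth a.
Proof.
apply: limn_esup_ge_near; apply: nearW => m.
by rewrite lee_fin mulr_ge0 ?invr_ge0 ?ln_nat_ge0.
Qed.

Lemma le_log_growth (a b : nat -> nat) :
  (forall m, (a m <= b m)%N) -> log_growth a <= log_growth b.
Proof.
move=> ab; apply: le_limn_esup => m.
rewrite lee_fin ler_wpM2r ?invr_ge0 ?ln_nat_ge0 //.
case: (a m) (ab m) => [|n] abm; first by rewrite ln0 ?ln_nat_ge0.
by rewrite ler_ln ?posrE ?ltr0n ?ler_nat // (leq_trans _ abm).
Qed.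

Lemma log_growth_ge_powR (a : nat -> nat) (d dl : R) :
  (0 < d)%R -> (0 < dl)%R ->
  (forall m, ((m%:R * dl) `^ d <= (a m)%:R)%R) -> d%:E <= log_growth a.
Proof.
move=> d0 dl0 a_ge; apply/lee_subgt0Pr => e e0; apply: limn_esup_ge_near.
set L := (`|d * ln dl| / e)%R.
exists (Num.Def.archi_bound (expR L)).+2 => // m /= Nm; rewrite lee_fin.
have m1 : (1 < m%:R :> R)%R by rewrite ltr1n; apply: leq_trans Nm.
have lnm_gt0 : (0 < ln (m%:R : R))%R := ln_gt0 m1.
have L_le_lnm : (L <= ln (m%:R : R))%R.
  rewrite -ler_expR lnK ?posrE; last lra.
  apply/ltW; apply: lt_le_trans (archi_boundP (ltW (expR_gt0 L))) _.
  by rewrite ler_nat (leq_trans _ Nm) // -addn2 leq_addr.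
have eL : (`|d * ln dl| <= e * ln (m%:R : R))%R.
  by rewrite [(e * _)%R]mulrC -ler_pdivrMr.
have mdl_gt0 : (0 < m%:R * dl :> R)%R by rewrite mulr_gt0 //; lra.
have ln_am : (d * (ln (m%:R : R) + ln dl) <= ln ((a m)%:R : R))%R.
  rewrite -lnM ?posrE //; last lra.
  rewrite -ln_powR ler_ln ?posrE ?powR_gt0 //.
  exact: lt_le_trans (powR_gt0 _ mdl_gt0) (a_ge m).
have := ler_norm (- (d * ln dl)); rewrite normrN ler_pdivlMr // => ?; nra.
Qed.

End LogGrowth.

Section Dimensions.
Variable k : fieldType.

Lemma GKdimE (A : algType k) : GKdim A =
  ereal_sup [set log_growth RR (fun m => fdim (spow s m))
            | s in [set s : seq A | subframe s]].
Proof. by []. Qed.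

Lemma log_growth_le_GKdim (A : algType k) (s : seq A) : subframe s ->
  (log_growth RR (fun m => fdim (spow s m)) <= GKdim A)%E.
Proof. by move=> s1; rewrite GKdimE; apply: ereal_sup_ubound; exists s. Qed.

Lemma GKdim_ge0 (A : algType k) : (0 <= GKdim A)%E.
Proof.
have one_subframe : subframe [:: 1 : A] by apply: span_mem; rewrite inE.
exact: le_trans (log_growth_ge0 _ _) (log_growth_le_GKdim one_subframe).
Qed.

Lemma LDdim_le_GKdim (A : algType k) : (1 : A) != 0 -> (LDdim A <= GKdim A)%E.
Proof.
move=> one_neq0; rewrite /LDdim; case: ifP => _; first exact: GKdim_ge0.
apply: ge_ereal_sup => _ [d [d0 [s [s1 [c [c0 s_expands]]]]] <-].
pose a m := fdim (spow s m).
have a_gt0 m : (0 < a m)%N := fdim_gt0 one_neq0 (subframe_spow m s1).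
have a_incr m :
    (a m)%:R + c * (a m)%:R `^ ((d - 1) / d) <= (a m.+1)%:R :> RR.
  apply: le_trans (s_expands _ (a_gt0 m)) _.
  by rewrite ler_nat; apply: fdimS; exact: span_spmul_spow.
have [dl dl0 a_ge] := powR_growth_of_increments c0 d0 a_gt0 a_incr.
exact: le_trans (log_growth_ge_powR d0 dl0 a_ge) (log_growth_le_GKdim s1).
Qed.

Lemma GKdim_le_injective (A B : algType k) (f : {lrmorphism A -> B}) :
  injective f -> (GKdim A <= GKdim B)%E.
Proof.
move=> f_inj; rewrite GKdimE; apply: ge_ereal_sup => _ [s s1 <-].
apply: le_trans (log_growth_le_GKdim (subframe_map f s1)).
by apply: le_log_growth => m; rewrite -map_spow; exact: fdim_map.
Qed.

End Dimensions.

Unset Implicit Arguments.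

Theorem lemma3p2 (k : fieldType) (chark0 : [pchar k] =i pred0)
  (A B : algType k) (f : {lrmorphism A -> B}) (f_inj : injective f) :
  prime_ring A -> goldie A -> prime_ring B -> goldie B ->
  LDdim A = LDdim B -> LD_stable B -> LD_stable A.
Proof.
move=> [one_neq0 _] _ _ _ LD_AB stable_B; apply/eqP.
rewrite eq_le LDdim_le_GKdim //= LD_AB stable_B.
exact: GKdim_le_injective f_inj.
Qed.
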